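(* Let $\mathsf{C}$ be an additive $\Bbbk$-linear category. For $n\in\mathbb{N}$ let $\mathsf{C}_n=\mathsf{C}_{M_n(\Bbbk)}$ and let $\widetilde{\mathsf{C}}_n=\mathsf{C}_n^{\omega}$ be its idempotent completion. Then there is a $\Bbbk$-linear equivalence of categories $\mathsf{C}^{\omega}\to\widetilde{\mathsf{C}}_n$. In particular, if $\mathsf{C}$ is idempotent complete, then $\mathsf{C}\simeq\widetilde{\mathsf{C}}_n$ for every $n\in\mathbb{N}$.
   Context: $\Bbbk$ is a field. For a $\Bbbk$-linear category $\mathsf{C}$ and a $\Bbbk$-algebra $\Gamma$, the category $\mathsf{C}_\Gamma$ has the same objects as $\mathsf{C}$, morphism spaces $\mathrm{Hom}_{\mathsf{C}_\Gamma}(X,Y)=\Gamma\otimes_{\Bbbk}\mathrm{Hom}_{\mathsf{C}}(X,Y)$, and composition induced by composition in $\mathsf{C}$ and multiplication in $\Gamma$. For an additive category $\mathcal{D}$, $\mathcal{D}^{\omega}$ denotes its idempotent completion (Karoubi envelope): objects are pairs $(X,e)$ with $e$ an idempotent endomorphism of $X$, and morphisms $(X,e)\to(Y,e')$ are $e'\,\mathrm{Hom}(X,Y)\,e$. *)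

From HB Require Import structures.
From mathcomp Require Import all_boot all_order all_algebra.
Set Implicit Arguments. Unset Strict Implicit. Unset Printing Implicit Defensive.
Import Order.TTheory GRing.Theory Num.Theory.
Local Open Scope ring_scope.

Record kcat (K : fieldType) := KCat {
  obj :> Type;
  hom : obj -> obj -> lmodType K;
  comp : forall X Y Z : obj, hom Y Z -> hom X Y -> hom X Z;
  idm : forall X : obj, hom X X;
  compA : forall X Y Z W (f : hom Z W) (g : hom Y Z) (h : hom X Y),
     comp f (comp g h) = comp (comp f g) h;
  comp1f : forall X Y (f : hom X Y), comp (idm Y) f = f;
  compf1 : forall X Y (f : hom X Y), comp f (idm X) = f;
  comp_linl : forall X Y Z (h : hom X Y) (a : K) (f g : hom Y Z),
     comp (a *: f + g) h = a *: comp f h + comp g h;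
  comp_linr : forall X Y Z (f : hom Y Z) (a : K) (g h : hom X Y),
     comp f (a *: g + h) = a *: comp f g + comp f h }.
Arguments obj {K} k.
Arguments hom {K} k X Y.
Arguments comp {K} k {X Y Z}.
Arguments idm {K} k X.

Section Basics.
Variables (K : fieldType) (C : kcat K).

Lemma comp0l {X Y Z : C} (h : hom C X Y) : comp C (0 : hom C Y Z) h = 0.
Proof.
have := comp_linl h (-1) (0 : hom C Y Z) 0.
by rewrite scaleN1r addNr => ->; rewrite scaleN1r addNr.
Qed.
Lemma comp0r {X Y Z : C} (f : hom C Y Z) : comp C f (0 : hom C X Y) = 0.
Proof.
have := comp_linr f (-1) (0 : hom C X Y) 0.
by rewrite scaleN1r addNr => ->; rewrite scaleN1r addNr.
Qed.
Lemma compDl {X Y Z : C} (h : hom C X Y) (f g : hom C Y Z) :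
  comp C (f + g) h = comp C f h + comp C g h.
Proof. by have := comp_linl h 1 f g; rewrite !scale1r. Qed.
Lemma compDr {X Y Z : C} (f : hom C Y Z) (g h : hom C X Y) :
  comp C f (g + h) = comp C f g + comp C f h.
Proof. by have := comp_linr f 1 g h; rewrite !scale1r. Qed.
Lemma compZl {X Y Z : C} (h : hom C X Y) a (f : hom C Y Z) :
  comp C (a *: f) h = a *: comp C f h.
Proof. by have := comp_linl h a f 0; rewrite !addr0 comp0l addr0. Qed.
Lemma compZr {X Y Z : C} (f : hom C Y Z) a (g : hom C X Y) :
  comp C f (a *: g) = a *: comp C f g.
Proof. by have := comp_linr f a g 0; rewrite !addr0 comp0r addr0. Qed.
Lemma comp_suml {X Y Z : C} (h : hom C X Y) (I : finType) (F : I -> hom C Y Z) :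
  comp C (\sum_i F i) h = \sum_i comp C (F i) h.
Proof. by rewrite (big_morph (fun f => comp C f h) (compDl h) (comp0l h)). Qed.
Lemma comp_sumr {X Y Z : C} (f : hom C Y Z) (I : finType) (F : I -> hom C X Y) :
  comp C f (\sum_i F i) = \sum_i comp C f (F i).
Proof. by rewrite (big_morph (fun g => comp C f g) (compDr f) (comp0r f)). Qed.
End Basics.

Definition is_zero_obj (K : fieldType) (C : kcat K) (Z : C) : Prop :=
  idm C Z = 0.

Definition is_biproduct (K : fieldType) (C : kcat K) (X Y S : C)
  (i1 : hom C X S) (i2 : hom C Y S) (p1 : hom C S X) (p2 : hom C S Y) : Prop :=
  [/\ comp C p1 i1 = idm C X, comp C p2 i2 = idm C Y,
      comp C p1 i2 = 0, comp C p2 i1 = 0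
    & comp C i1 p1 + comp C i2 p2 = idm C S].

Definition additive (K : fieldType) (C : kcat K) : Prop :=
  (exists Z : C, is_zero_obj Z) /\
  forall X Y : C, exists (S : C) (i1 : hom C X S) (i2 : hom C Y S)
    (p1 : hom C S X) (p2 : hom C S Y), is_biproduct i1 i2 p1 p2.

Definition idempotent_complete (K : fieldType) (C : kcat K) : Prop :=
  forall (X : C) (e : hom C X X), comp C e e = e ->
    exists (Y : C) (s : hom C Y X) (r : hom C X Y),
      comp C r s = idm C Y /\ comp C s r = e.

(* C_{M_n(k)}: Hom = M_n(k) (x) Hom_C(X,Y), identified with n x n matrices
   with entries in Hom_C(X,Y) (the entry (i,j) of E_ij (x) f is f), and
   composition (a (x) f)(b (x) g) = ab (x) fg, i.e. matrix multiplication. *)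
Section MatCat.
Variables (K : fieldType) (C : kcat K) (n : nat).

Definition mhom (X Y : C) : lmodType K := {ffun 'I_n * 'I_n -> hom C X Y}.

Definition mcomp (X Y Z : C) (F : mhom Y Z) (G : mhom X Y) : mhom X Z :=
  [ffun ij : 'I_n * 'I_n => \sum_(k < n) comp C (F (ij.1, k)) (G (k, ij.2))].

Definition midm (X : C) : mhom X X :=
  [ffun ij : 'I_n * 'I_n => if ij.1 == ij.2 then idm C X else 0].

Lemma mcompA X Y Z W (f : mhom Z W) (g : mhom Y Z) (h : mhom X Y) :
  mcomp f (mcomp g h) = mcomp (mcomp f g) h.
Proof.
apply/ffunP => -[i j]; rewrite !ffunE /=.
under eq_bigr => k _ do rewrite ffunE comp_sumr.
rewrite exchange_big /=; apply: eq_bigr => l _.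
by rewrite ffunE comp_suml; apply: eq_bigr => k _; rewrite compA.
Qed.

Lemma mcomp1f X Y (f : mhom X Y) : mcomp (midm Y) f = f.
Proof.
apply/ffunP => -[i j]; rewrite !ffunE /= (bigD1 i) //= big1 ?addr0.
  by rewrite ffunE eqxx comp1f.
by move=> k /negbTE ki; rewrite ffunE /= eq_sym ki comp0l.
Qed.

Lemma mcompf1 X Y (f : mhom X Y) : mcomp f (midm X) = f.
Proof.
apply/ffunP => -[i j]; rewrite !ffunE /= (bigD1 j) //= big1 ?addr0.
  by rewrite ffunE eqxx compf1.
by move=> k /negbTE kj; rewrite ffunE /= kj comp0r.
Qed.

Lemma mcomp_linl X Y Z (h : mhom X Y) (a : K) (f g : mhom Y Z) :
  mcomp (a *: f + g) h = a *: mcomp f h + mcomp g h.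
Proof.
apply/ffunP => -[i j]; rewrite !ffunE /= scaler_sumr -big_split /=.
by apply: eq_bigr => k _; rewrite !ffunE comp_linl.
Qed.

Lemma mcomp_linr X Y Z (f : mhom Y Z) (a : K) (g h : mhom X Y) :
  mcomp f (a *: g + h) = a *: mcomp f g + mcomp f h.
Proof.
apply/ffunP => -[i j]; rewrite !ffunE /= scaler_sumr -big_split /=.
by apply: eq_bigr => k _; rewrite !ffunE comp_linr.
Qed.

Definition matcat : kcat K :=
  KCat mcompA mcomp1f mcompf1 mcomp_linl mcomp_linr.
End MatCat.

Section Karoubi.
Variables (K : fieldType) (C : kcat K).

Definition kobj := {X : C & {e : hom C X X | comp C e e = e}}.
Definition kob (A : kobj) : C := projT1 A.
Definition kid (A : kobj) : hom C (kob A) (kob A) := proj1_sig (projT2 A).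
Lemma kidP (A : kobj) : comp C (kid A) (kid A) = kid A.
Proof. exact: proj2_sig (projT2 A). Qed.

Definition kpred (A B : kobj) : {pred hom C (kob A) (kob B)} :=
  fun f => comp C (kid B) (comp C f (kid A)) == f.
Arguments kpred : clear implicits.

Lemma kpred_submod (A B : kobj) : GRing.submod_closed (kpred A B).
Proof.
split; first by rewrite /kpred unfold_in /= comp0l comp0r.
move=> a u v; rewrite /kpred !unfold_in /= => /eqP Hu /eqP Hv.
by rewrite comp_linl comp_linr Hu Hv.
Qed.

HB.instance Definition _ (A B : kobj) :=
  GRing.isSubmodClosed.Build K (hom C (kob A) (kob B)) (kpred A B)
    (GRing.submod_closed_semi (kpred_submod A B)).

Record khom_t (A B : kobj) := KHom {
  kval :> hom C (kob A) (kob B); kvalP : kval \in kpred A B }.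
HB.instance Definition _ (A B : kobj) := [isSub for @kval A B].
HB.instance Definition _ (A B : kobj) := [Choice of khom_t A B by <:].
HB.instance Definition _ (A B : kobj) :=
  [SubChoice_isSubLmodule of khom_t A B by <:].
Definition khom (A B : kobj) : lmodType K := khom_t A B.

Lemma kpred_l (A B : kobj) (f : hom C (kob A) (kob B)) :
  f \in kpred A B -> comp C (kid B) f = f.
Proof.
rewrite unfold_in => /eqP Hf; rewrite -{2}Hf -{1}Hf.
by rewrite compA kidP.
Qed.
Lemma kpred_r (A B : kobj) (f : hom C (kob A) (kob B)) :
  f \in kpred A B -> comp C f (kid A) = f.
Proof.
rewrite unfold_in => /eqP Hf; rewrite -{2}Hf -{1}Hf.
by rewrite -!compA kidP.
Qed.

Lemma kcomp_subproof (A B D : kobj) (f : khom B D) (g : khom A B) :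
  comp C (val f) (val g) \in kpred A D.
Proof.
rewrite unfold_in /=; apply/eqP.
by rewrite -compA kpred_r ?compA ?kpred_l //; apply: valP.
Qed.
Definition kcomp (A B D : kobj) (f : khom B D) (g : khom A B) : khom A D :=
  KHom (kcomp_subproof f g).

Lemma kidm_subproof (A : kobj) : kid A \in kpred A A.
Proof. by rewrite unfold_in /= !kidP. Qed.
Definition kidm (A : kobj) : khom A A := KHom (kidm_subproof A).

Lemma kcompA A B D E (f : khom D E) (g : khom B D) (h : khom A B) :
  kcomp f (kcomp g h) = kcomp (kcomp f g) h.
Proof. by apply: val_inj; rewrite /= compA. Qed.
Lemma kcomp1f A B (f : khom A B) : kcomp (kidm B) f = f.
Proof. by apply: val_inj; rewrite /= kpred_l //; apply: valP. Qed.
Lemma kcompf1 A B (f : khom A B) : kcomp f (kidm A) = f.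
Proof. by apply: val_inj; rewrite /= kpred_r //; apply: valP. Qed.
Lemma kcomp_linl A B D (h : khom A B) (a : K) (f g : khom B D) :
  kcomp (a *: f + g) h = a *: kcomp f h + kcomp g h.
Proof. by apply: val_inj; rewrite /= comp_linl. Qed.
Lemma kcomp_linr A B D (f : khom B D) (a : K) (g h : khom A B) :
  kcomp f (a *: g + h) = a *: kcomp f g + kcomp f h.
Proof. by apply: val_inj; rewrite /= comp_linr. Qed.

Definition karoubi : kcat K :=
  @KCat K kobj khom kcomp kidm kcompA kcomp1f kcompf1 kcomp_linl kcomp_linr.

End Karoubi.

Record kfunctor (K : fieldType) (C D : kcat K) := KFunctor {
  fobj : C -> D;
  fmap : forall X Y : C, hom C X Y -> hom D (fobj X) (fobj Y);
  fmap_lin : forall (X Y : C) (a : K) (f g : hom C X Y),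
    fmap (a *: f + g) = a *: fmap f + fmap g;
  fmap_comp : forall (X Y Z : C) (f : hom C Y Z) (g : hom C X Y),
    fmap (comp C f g) = comp D (fmap f) (fmap g);
  fmap_id : forall X : C, fmap (idm C X) = idm D (fobj X) }.
Arguments fobj {K C D} k X.
Arguments fmap {K C D} k {X Y} _.

Definition is_iso (K : fieldType) (C : kcat K) (X Y : C) (f : hom C X Y) : Prop :=
  exists g : hom C Y X, comp C g f = idm C X /\ comp C f g = idm C Y.

Definition is_kequivalence (K : fieldType) (C D : kcat K) (F : kfunctor C D) : Prop :=
  exists G : kfunctor D C,
    (exists eta : forall X : C, hom C X (fobj G (fobj F X)),
       (forall X : C, is_iso (eta X)) /\
       (forall (X Y : C) (f : hom C X Y),
          comp C (fmap G (fmap F f)) (eta X) = comp C (eta Y) f)) /\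
    (exists eps : forall Y : D, hom D (fobj F (fobj G Y)) Y,
       (forall Y : D, is_iso (eps Y)) /\
       (forall (X Y : D) (g : hom D X Y),
          comp D (eps Y) (fmap F (fmap G g)) = comp D g (eps X))).

Definition kequivalent (K : fieldType) (C D : kcat K) : Prop :=
  exists F : kfunctor C D, is_kequivalence F.

(** Fix [i0 < n]. The corner embedding [f |-> E_(i0,i0) (x) f] of [C] into
    [C_n] is k-linear, multiplicative and bijective onto the matrices fixed by
    the corner idempotents, so it induces a fully faithful functor
    [C^omega -> C~_n]. It is essentially surjective: an object [(X, E)] of
    [C~_n] is isomorphic to [(S, Q E P)] whenever [P Q = 1], and taking for
    [Q] and [P] the row and column formed by the injections and projections
    of [S = X^n] makes [Q E P] a corner matrix. When [C] is idempotent
    complete, [C -> C^omega] is an equivalence as well. *)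
From HB Require Import structures.
From mathcomp Require Import all_boot all_order all_algebra.
From Stdlib Require Import ClassicalEpsilon.
(* Imported before [Defs], whose [additive] GRing.Theory would shadow. *)
Import GRing.Theory.
From Pilot Require Import Defs.

Set Implicit Arguments. Unset Strict Implicit. Unset Printing Implicit Defensive.
Local Open Scope ring_scope.

Section Isomorphic.
Variables (K : fieldType) (C : kcat K).

Definition isomorphic (X Y : C) : Prop := exists f : hom C X Y, is_iso f.

Lemma isomorphic_sym (X Y : C) : isomorphic X Y -> isomorphic Y X.
Proof. by move=> [f [g [gf fg]]]; exists g, f. Qed.

Lemma isomorphic_trans (X Y Z : C) :
  isomorphic X Y -> isomorphic Y Z -> isomorphic X Z.
Proof.
move=> [f [f' [f'f ff']]] [g [g' [g'g gg']]].
exists (comp C g f), (comp C f' g'); split.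
  by rewrite -compA (compA g') g'g comp1f.
by rewrite -compA (compA f) ff' comp1f.
Qed.

End Isomorphic.

Section FunctorProperties.
Variables (K : fieldType) (C D : kcat K) (F : kfunctor C D).

Definition faithful : Prop := forall X Y : C, injective (@fmap _ _ _ F X Y).

Definition full : Prop :=
  forall (X Y : C) (g : hom D (fobj F X) (fobj F Y)), exists f, fmap F f = g.

Definition ess_surj : Prop := forall Y : D, exists X, isomorphic (fobj F X) Y.

Lemma fmap_is_iso (X Y : C) (f : hom C X Y) : is_iso f -> is_iso (fmap F f).
Proof.
by move=> [g [gf fg]]; exists (fmap F g); rewrite -!fmap_comp gf fg !fmap_id.
Qed.

End FunctorProperties.

Section Composition.
Variables (K : fieldType) (C D E : kcat K) (G : kfunctor D E) (F : kfunctor C D).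

Lemma kfunctor_comp_lin (X Y : C) (a : K) (f g : hom C X Y) :
  fmap G (fmap F (a *: f + g)) = a *: fmap G (fmap F f) + fmap G (fmap F g).
Proof. by rewrite !fmap_lin. Qed.

Lemma kfunctor_comp_comp (X Y Z : C) (f : hom C Y Z) (g : hom C X Y) :
  fmap G (fmap F (comp C f g)) = comp E (fmap G (fmap F f)) (fmap G (fmap F g)).
Proof. by rewrite !fmap_comp. Qed.

Lemma kfunctor_comp_id (X : C) :
  fmap G (fmap F (idm C X)) = idm E (fobj G (fobj F X)).
Proof. by rewrite !fmap_id. Qed.

Definition kfunctor_comp : kfunctor C E :=
  @KFunctor K C E (fun X => fobj G (fobj F X)) (fun X Y f => fmap G (fmap F f))
    kfunctor_comp_lin kfunctor_comp_comp kfunctor_comp_id.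

Lemma faithful_comp : faithful G -> faithful F -> faithful kfunctor_comp.
Proof. by move=> G_faithful F_faithful X Y f g /G_faithful /F_faithful. Qed.

Lemma full_comp : full G -> full F -> full kfunctor_comp.
Proof.
move=> G_full F_full X Y g; have [h <-] := G_full _ _ g.
by have [f <-] := F_full _ _ h; exists f.
Qed.

Lemma ess_surj_comp : ess_surj G -> ess_surj F -> ess_surj kfunctor_comp.
Proof.
move=> G_ess F_ess Z; have [Y isoYZ] := G_ess Z; have [X [f isof]] := F_ess Y.
by exists X; apply: isomorphic_trans isoYZ; exists (fmap G f); apply: fmap_is_iso.
Qed.

End Composition.

Section FullyFaithfulEssSurj.
Variables (K : fieldType) (C D : kcat K) (F : kfunctor C D).
Hypotheses (F_faithful : faithful F) (F_full : full F) (F_ess : ess_surj F).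

Local Notation choose P := (proj1_sig (constructive_indefinite_description _ P)).
Local Notation chooseP P := (proj2_sig (constructive_indefinite_description _ P)).

Let preimage (X Y : C) (g : hom D (fobj F X) (fobj F Y)) : hom C X Y :=
  choose (F_full g).
Let fmap_preimage (X Y : C) (g : hom D (fobj F X) (fobj F Y)) :
  fmap F (preimage g) = g := chooseP (F_full g).

Let inv_obj (Y : D) : C := choose (F_ess Y).
Let counit (Y : D) : hom D (fobj F (inv_obj Y)) Y := choose (chooseP (F_ess Y)).
Let counit_is_iso (Y : D) : is_iso (counit Y) := chooseP (chooseP (F_ess Y)).
Let counit_inv (Y : D) : hom D Y (fobj F (inv_obj Y)) := choose (counit_is_iso Y).
Let counitK (Y : D) : comp D (counit_inv Y) (counit Y) = idm D _ :=
  proj1 (chooseP (counit_is_iso Y)).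
Let counit_invK (Y : D) : comp D (counit Y) (counit_inv Y) = idm D Y :=
  proj2 (chooseP (counit_is_iso Y)).

Let inv_map (Y Y' : D) (g : hom D Y Y') : hom C (inv_obj Y) (inv_obj Y') :=
  preimage (comp D (counit_inv Y') (comp D g (counit Y))).

Let inv_map_lin (Y Y' : D) (a : K) (f g : hom D Y Y') :
  inv_map (a *: f + g) = a *: inv_map f + inv_map g.
Proof.
by apply: F_faithful; rewrite fmap_lin !fmap_preimage comp_linl comp_linr.
Qed.

Let inv_map_comp (Y Y' Y'' : D) (f : hom D Y' Y'') (g : hom D Y Y') :
  inv_map (comp D f g) = comp C (inv_map f) (inv_map g).
Proof.
apply: F_faithful; rewrite fmap_comp !fmap_preimage -!compA.
by rewrite (compA (counit Y')) counit_invK comp1f.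
Qed.

Let inv_map_id (Y : D) : inv_map (idm D Y) = idm C (inv_obj Y).
Proof.
by apply: F_faithful; rewrite fmap_preimage fmap_id comp1f counitK.
Qed.

Let inverse : kfunctor D C := KFunctor inv_map_lin inv_map_comp inv_map_id.

Lemma ff_ess_surj_kequivalence : is_kequivalence F.
Proof.
exists inverse; split.
  exists (fun X => preimage (counit_inv (fobj F X))); split.
    move=> X; exists (preimage (counit (fobj F X))).
    by split; apply: F_faithful; rewrite fmap_comp !fmap_preimage fmap_id.
  move=> X Y f; apply: F_faithful; rewrite !fmap_comp !fmap_preimage -!compA.
  by rewrite counit_invK compf1.
exists counit; split => // Y Y' g /=.
by rewrite fmap_preimage !compA counit_invK comp1f.
Qed.

End FullyFaithfulEssSurj.

Section Karoubi.
Variables (K : fieldType) (D : kcat K).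

Definition KObj (X : D) (e : hom D X X) (e_idem : comp D e e = e) : kobj D :=
  existT _ X (exist _ e e_idem).

Lemma kpredP (A B : kobj D) (f : hom D (kob A) (kob B)) :
  reflect (comp D (kid B) (comp D f (kid A)) = f) (f \in @kpred _ D A B).
Proof. by rewrite unfold_in; apply: eqP. Qed.

Lemma karoubi_retract_iso (A B : karoubi D)
    (P : hom D (kob B) (kob A)) (Q : hom D (kob A) (kob B)) :
  comp D P Q = idm D (kob A) -> kid B = comp D Q (comp D (kid A) P) ->
  isomorphic B A.
Proof.
move=> PQ eB.
have eP_in : comp D (kid A) P \in @kpred _ D B A.
  by apply/kpredP; rewrite eB -!compA (compA P Q) PQ comp1f !compA !kidP.
have Qe_in : comp D Q (kid A) \in @kpred _ D A B.
  by apply/kpredP; rewrite eB -!compA (compA P Q) PQ comp1f !kidP.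
exists (KHom eP_in), (KHom Qe_in); split; apply: val_inj => /=.
  by rewrite eB -!compA (compA (kid A) (kid A)) kidP.
by rewrite -!compA (compA P Q) PQ comp1f kidP.
Qed.

End Karoubi.

Section KaroubiInclusion.
Variables (K : fieldType) (D : kcat K).

Definition karoubi_incl_obj (X : D) : kobj D := KObj (comp1f (idm D X)).

Lemma karoubi_incl_subproof (X Y : D) (f : hom D X Y) :
  f \in @kpred _ D (karoubi_incl_obj X) (karoubi_incl_obj Y).
Proof. by apply/kpredP; rewrite comp1f compf1. Qed.

Definition karoubi_incl_map (X Y : D) (f : hom D X Y) :
  hom (karoubi D) (karoubi_incl_obj X) (karoubi_incl_obj Y) :=
  KHom (karoubi_incl_subproof f).

Lemma karoubi_incl_lin (X Y : D) (a : K) (f g : hom D X Y) :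
  karoubi_incl_map (a *: f + g) = a *: karoubi_incl_map f + karoubi_incl_map g.
Proof. exact: val_inj. Qed.

Lemma karoubi_incl_comp (X Y Z : D) (f : hom D Y Z) (g : hom D X Y) :
  karoubi_incl_map (comp D f g) =
  comp (karoubi D) (karoubi_incl_map f) (karoubi_incl_map g).
Proof. exact: val_inj. Qed.

Lemma karoubi_incl_id (X : D) :
  karoubi_incl_map (idm D X) = idm (karoubi D) (karoubi_incl_obj X).
Proof. exact: val_inj. Qed.

Definition karoubi_incl : kfunctor D (karoubi D) :=
  KFunctor karoubi_incl_lin karoubi_incl_comp karoubi_incl_id.

Lemma karoubi_incl_faithful : faithful karoubi_incl.
Proof. by move=> X Y f g /(congr1 val). Qed.

Lemma karoubi_incl_full : full karoubi_incl.
Proof. by move=> X Y g; exists (val g); apply: val_inj. Qed.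

Lemma karoubi_incl_ess_surj : idempotent_complete D -> ess_surj karoubi_incl.
Proof.
move=> idem_split A; have [Y [s [r [rs sr]]]] := idem_split _ _ (kidP A).
exists Y; apply: isomorphic_sym.
by apply: (@karoubi_retract_iso _ _ (karoubi_incl_obj Y) A r s rs); rewrite comp1f.
Qed.

End KaroubiInclusion.

Definition has_biproducts (K : fieldType) (C : kcat K) : Prop :=
  forall X Y : C, exists (S : C) (i1 : hom C X S) (i2 : hom C Y S)
    (p1 : hom C S X) (p2 : hom C S Y), is_biproduct i1 i2 p1 p2.

Lemma biproducts_orthogonal_copies (K : fieldType) (C : kcat K) (m : nat) (X : C) :
  has_biproducts C ->
  exists (S : C) (io : 'I_m -> hom C X S) (pr : 'I_m -> hom C S X),
    forall i j, comp C (pr i) (io j) = if i == j then idm C X else 0.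
Proof.
move=> biprods; elim: m => [|m [S [io [pr orth]]]].
  by exists X, (fun _ => 0), (fun _ => 0); case.
have [T [i1 [i2 [p1 [p2 [p1i1 p2i2 p1i2 p2i1 _]]]]]] := biprods S X.
exists T, (fun k => if unlift ord_max k is Some k' then comp C i1 (io k') else i2).
exists (fun k => if unlift ord_max k is Some k' then comp C (pr k') p1 else p2).
move=> i j.
case: (unliftP ord_max i) => [i'|] ->; case: (unliftP ord_max j) => [j'|] -> /=.
- by rewrite -compA (compA p1) p1i1 comp1f orth (inj_eq (@lift_inj _ ord_max)).
- by rewrite -compA p1i2 comp0r eq_sym (negbTE (neq_lift _ _)).
- by rewrite compA p2i1 comp0l (negbTE (neq_lift _ _)).
- by rewrite p2i2 eqxx.
Qed.

Section CornerMatrices.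
Variables (K : fieldType) (C : kcat K) (n : nat) (i0 : 'I_n).
Local Notation M := (matcat C n).

Definition corner (X Y : C) (f : hom C X Y) : hom M X Y :=
  [ffun ij : 'I_n * 'I_n => if (ij.1 == i0) && (ij.2 == i0) then f else 0].

Lemma corner00 (X Y : C) (f : hom C X Y) : corner f (i0, i0) = f.
Proof. by rewrite ffunE /= eqxx. Qed.

Lemma corner_inj (X Y : C) : injective (@corner X Y).
Proof.
by move=> f g /(congr1 (fun N : hom M X Y => N (i0, i0))); rewrite !corner00.
Qed.

Lemma corner_lin (X Y : C) (a : K) (f g : hom C X Y) :
  corner (a *: f + g) = a *: corner f + corner g.
Proof.
apply/ffunP => -[i j]; rewrite !ffunE /=.
by case: ifP => _; rewrite ?scaler0 ?addr0.
Qed.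

Lemma comp_cornerl (X Y Z : C) (f : hom C Y Z) (N : hom M X Y) :
  comp M (corner f) N =
  [ffun ij : 'I_n * 'I_n => if ij.1 == i0 then comp C f (N (i0, ij.2)) else 0].
Proof.
apply/ffunP => -[i j]; rewrite /= !ffunE /= (bigD1 i0) //= big1 ?addr0.
  by rewrite ffunE /= eqxx andbT; case: ifP => _; rewrite ?comp0l.
by move=> k /negbTE kn; rewrite ffunE /= kn andbF comp0l.
Qed.

Lemma comp_cornerr (X Y Z : C) (N : hom M Y Z) (g : hom C X Y) :
  comp M N (corner g) =
  [ffun ij : 'I_n * 'I_n => if ij.2 == i0 then comp C (N (ij.1, i0)) g else 0].
Proof.
apply/ffunP => -[i j]; rewrite /= !ffunE /= (bigD1 i0) //= big1 ?addr0.
  by rewrite ffunE /= eqxx /=; case: ifP => _; rewrite ?comp0r.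
by move=> k /negbTE kn; rewrite ffunE /= kn /= comp0r.
Qed.

Lemma corner_sandwich (X Y Z W : C)
    (f : hom C Z W) (N : hom M Y Z) (g : hom C X Y) :
  comp M (corner f) (comp M N (corner g)) =
  corner (comp C f (comp C (N (i0, i0)) g)).
Proof.
rewrite comp_cornerr comp_cornerl; apply/ffunP => -[i j]; rewrite !ffunE /=.
by case: (i == i0) => //=; case: (j == i0); rewrite ?comp0r.
Qed.

Lemma corner_comp (X Y Z : C) (f : hom C Y Z) (g : hom C X Y) :
  comp M (corner f) (corner g) = corner (comp C f g).
Proof.
rewrite comp_cornerl; apply/ffunP => -[i j]; rewrite !ffunE /= eqxx /=.
by case: (i == i0) => //=; case: (j == i0); rewrite ?comp0r.
Qed.

Lemma corner_supported (X Y : C) (N : hom M X Y) :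
  comp M (corner (idm C Y)) (comp M N (corner (idm C X))) = N ->
  N = corner (N (i0, i0)).
Proof. by move=> NE; rewrite -{1}NE corner_sandwich comp1f compf1. Qed.

Variables (X S : C) (io : 'I_n -> hom C X S) (pr : 'I_n -> hom C S X).

Definition row_of : hom M X S :=
  [ffun ij : 'I_n * 'I_n => if ij.1 == i0 then io ij.2 else 0].
Definition col_of : hom M S X :=
  [ffun ij : 'I_n * 'I_n => if ij.2 == i0 then pr ij.1 else 0].

Lemma col_ofK :
  (forall i j, comp C (pr i) (io j) = if i == j then idm C X else 0) ->
  comp M col_of row_of = idm M X.
Proof.
move=> orth; apply/ffunP => -[i j].
rewrite /= !ffunE /= (bigD1 i0) //= big1 ?addr0.
  by rewrite !ffunE /= !eqxx orth.
by move=> k /negbTE kn; rewrite !ffunE /= kn comp0r.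
Qed.

Lemma corner_row_of : comp M (corner (idm C S)) row_of = row_of.
Proof.
rewrite comp_cornerl; apply/ffunP => -[i j]; rewrite !ffunE /= eqxx comp1f.
by case: eqP => // ->.
Qed.

Lemma col_of_corner : comp M col_of (corner (idm C S)) = col_of.
Proof.
rewrite comp_cornerr; apply/ffunP => -[i j]; rewrite !ffunE /= eqxx compf1.
by case: eqP => // ->.
Qed.

End CornerMatrices.

Section KaroubiCorner.
Variables (K : fieldType) (C : kcat K) (n : nat) (i0 : 'I_n).
Local Notation M := (matcat C n).
Local Notation corner := (corner i0).

Lemma corner_idem (X : C) (e : hom C X X) :
  comp C e e = e -> comp M (corner e) (corner e) = corner e.
Proof. by move=> e_idem; rewrite corner_comp e_idem. Qed.

Definition karoubi_corner_obj (A : kobj C) : kobj M :=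
  KObj (corner_idem (kidP A)).

Lemma karoubi_corner_subproof (A B : kobj C) (f : khom A B) :
  corner (val f) \in @kpred _ M (karoubi_corner_obj A) (karoubi_corner_obj B).
Proof.
by apply/(@kpredP _ M); rewrite !corner_comp; congr corner; apply/kpredP/valP.
Qed.

Definition karoubi_corner_map (A B : karoubi C) (f : hom (karoubi C) A B) :
  hom (karoubi M) (karoubi_corner_obj A) (karoubi_corner_obj B) :=
  KHom (karoubi_corner_subproof f).

Lemma karoubi_corner_lin (A B : karoubi C) (a : K) (f g : hom (karoubi C) A B) :
  karoubi_corner_map (a *: f + g) =
  a *: karoubi_corner_map f + karoubi_corner_map g.
Proof. by apply: val_inj; rewrite /= corner_lin. Qed.

Lemma karoubi_corner_comp (A B D : karoubi C)
    (f : hom (karoubi C) B D) (g : hom (karoubi C) A B) :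
  karoubi_corner_map (comp (karoubi C) f g) =
  comp (karoubi M) (karoubi_corner_map f) (karoubi_corner_map g).
Proof. by apply: val_inj; symmetry; apply: corner_comp. Qed.

Lemma karoubi_corner_id (A : karoubi C) :
  karoubi_corner_map (idm (karoubi C) A) =
  idm (karoubi M) (karoubi_corner_obj A).
Proof. exact: val_inj. Qed.

Definition karoubi_corner : kfunctor (karoubi C) (karoubi M) :=
  KFunctor karoubi_corner_lin karoubi_corner_comp karoubi_corner_id.

Lemma karoubi_corner_faithful : faithful karoubi_corner.
Proof. by move=> A B f g /(congr1 val) /corner_inj /val_inj. Qed.

Lemma karoubi_corner_full : full karoubi_corner.
Proof.
move=> A B g; set g00 := val g (i0, i0).
have gE : corner (comp C (kid B) (comp C g00 (kid A))) = val g.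
  by rewrite -corner_sandwich; apply/kpredP: (valP g).
have g00E : comp C (kid B) (comp C g00 (kid A)) = g00.
  by rewrite {2}/g00 -gE corner00.
have g00_in : g00 \in @kpred _ C A B by apply/kpredP.
by exists (KHom g00_in); apply: val_inj; rewrite /= -g00E.
Qed.

Lemma karoubi_corner_ess_surj : has_biproducts C -> ess_surj karoubi_corner.
Proof.
move=> biprods B; set E := kid B.
have [S [io [pr orth]]] := biproducts_orthogonal_copies n (kob B : C) biprods.
pose P := col_of i0 pr; pose Q := row_of i0 io.
have PQ : comp M P Q = idm M (kob B) := col_ofK i0 orth.
have QEP_corner :
    comp M Q (comp M E P) = corner ((comp M Q (comp M E P)) (i0, i0)).
  by apply: corner_supported; rewrite !compA corner_row_of -!compA col_of_corner.
set e := (comp M Q (comp M E P)) (i0, i0) in QEP_corner.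
have e_idem : comp C e e = e.
  apply: (corner_inj (i0 := i0)); rewrite -corner_comp -QEP_corner.
  by rewrite -!compA (compA P Q) PQ comp1f (compA E E) kidP.
exists (KObj e_idem).
exact: (karoubi_retract_iso (B := karoubi_corner_obj (KObj e_idem)) PQ (esym QEP_corner)).
Qed.

End KaroubiCorner.

Theorem lemma5p2 (K : fieldType) (C : kcat K) (n : nat) :
  additive C -> (0 < n)%N ->
  kequivalent (karoubi C) (karoubi (matcat C n)) /\
  (idempotent_complete C -> kequivalent C (karoubi (matcat C n))).
Proof.
move=> [_ biprods] n_gt0; pose corner := karoubi_corner C (Ordinal n_gt0).
have corner_faithful : faithful corner by exact: karoubi_corner_faithful.
have corner_full : full corner by exact: karoubi_corner_full.
have corner_ess_surj : ess_surj corner by exact: karoubi_corner_ess_surj.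
split; first by exists corner; apply: ff_ess_surj_kequivalence.
move=> idem_complete; exists (kfunctor_comp corner (karoubi_incl C)).
apply: ff_ess_surj_kequivalence.
- by apply: faithful_comp; last exact: karoubi_incl_faithful.
- by apply: full_comp; last exact: karoubi_incl_full.
- exact: ess_surj_comp (karoubi_incl_ess_surj idem_complete).
Qed.
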